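(* Let $n,m,k\in\mathbb{N}$, $p\in\mathbb{N}\cup\{0\}$, and let $F:V(T_n)\to V(D_m)$ satisfy $2^{p}d_{T_n}(u,v)\le d_{D_m}(F(u),F(v))\le 2^k\cdot 2^{p}d_{T_n}(u,v)$ for all $u,v\in V(T_n)$. Let $s$ be a vertex of $T_n$, and let $M$ be a subdiamond of $D_m$ such that $F$ maps $s$ and all descendants of $s$ lying in generations $1,2,\dots,2^k+2$ relative to $s$ into $M$. Let $s_1,s_2,s_3,s_4$ be the four grandchildren of $s$, and for $i=1,\dots,4$ let $S_i$ be the set of those descendants of $s_i$ which lie in generations $\ge 2^k+3$ relative to $s$. Then for at most two indices $i\in\{1,2,3,4\}$ the set $S_i$ contains a vertex $x$ with $F(x)\notin M$.
   Context: $T_n$: vertices are finite $0$-$1$ sequences of length at most $n$; two vertices are adjacent if one sequence is obtained from the other by adding one term on the right; metric is the shortest path metric. A descendant of $s$ is a sequence extending $s$; it lies in generation $j$ relative to $s$ if it is $j$ terms longer than $s$ ($s$ itself is generation $0$); grandchildren are the descendants in generation $2$. Diamonds: $D_0$ is an edge; $D_i$ is obtained from $D_{i-1}$ by replacing each edge $uv$ by a quadrilateral $u,a,v,b$; $D_m$ has the shortest path metric with unit edges. A subdiamond of $D_m$ is the set of vertices that evolved from a single edge $e$ of some $D_j$ ($0\le j\le m$), including the endpoints of $e$ (its top and bottom). *)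

From mathcomp Require Import all_boot.
Set Implicit Arguments. Unset Strict Implicit. Unset Printing Implicit Defensive.

Inductive walk (T : Type) (adj : T -> T -> Prop) : T -> T -> nat -> Prop :=
  | walk0 x : walk adj x x 0
  | walkS x y z k : adj x y -> walk adj y z k -> walk adj x z k.+1.

Definition isdist (T : Type) (adj : T -> T -> Prop) (u v : T) (d : nat) : Prop :=
  walk adj u v d /\ forall d', walk adj u v d' -> d <= d'.

Definition Tvert (n : nat) (s : seq bool) : Prop := size s <= n.
Definition Tadj (n : nat) (u v : seq bool) : Prop :=
  Tvert n u /\ Tvert n v /\ exists b : bool, v = rcons u b \/ u = rcons v b.

(* ---------- The diamond graphs D_m ----------
   An edge of D_m is a word w : seq (bool*bool) of size m; its head (s,h)
   says: w is the edge u--c (h = false) or c--t (h = true) of the quadrilateral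
   u, c, t, c' that replaced the parent edge (behead w) = (u,t) of D_(m-1),
   where c = inr (behead w, s) is the new vertex on side s.
   Vertices: inl false = bottom, inl true = top, inr (w,s) = vertex created on
   side s when subdividing the edge w. [ends w] = (bottom end, top end). *)
Definition dvtx := (bool + (seq (bool * bool) * bool))%type.

Fixpoint ends (w : seq (bool * bool)) : dvtx * dvtx :=
  match w with
  | [::] => (inl false, inl true)
  | (s, h) :: w' =>
      let c : dvtx := inr (w', s) in
      if h then (c, (ends w').2) else ((ends w').1, c)
  end.

Definition Dvert (m : nat) (v : dvtx) : Prop :=
  exists w, size w = m /\ (v = (ends w).1 \/ v = (ends w).2).
Definition Dadj (m : nat) (u v : dvtx) : Prop :=
  exists w, size w = m /\ (ends w = (u, v) \/ ends w = (v, u)).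

(* Subdiamond of D_m generated by the edge e of D_(size e) (size e <= m):
   all vertices of D_m that are endpoints of edges of D_m descending from e
   (the ancestor of an edge w of D_m in D_j is its suffix of size j). *)
Definition subdiamond (m : nat) (e : seq (bool * bool)) (v : dvtx) : Prop :=
  exists w, size w = m /\ suffix e w /\ (v = (ends w).1 \/ v = (ends w).2).

From mathcomp Require Import all_boot.
From Stdlib Require Import Classical.
From mathcomp Require Import zify.
Set Implicit Arguments. Unset Strict Implicit. Unset Printing Implicit Defensive.

(* Write M for the subdiamond generated by e, and let the
   "terminals" of M be the two endpoints of e.  Suppose the branch below the
   grandchild s_i contains a vertex x, in generation >= 2^k+3, with F x
   outside M.  Walking down the tree path towards x, starting at generation
   2^k+2 (where F is still in M by hypothesis), there is a first tree edge
   (a, a b) with F a in M and F (a b) outside M.  By the upper Lipschitz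
   bound F a and F (a b) are joined by a walk of length <= 2^k 2^p in D_m,
   and any walk leaving a subdiamond passes through one of its terminals.
   So F a lies within 2^k 2^p of a terminal.  If three branches escaped, two
   of them would get the same terminal c; their vertices a, a' are at tree
   distance >= 2 2^k + 2 (they separate at s or at a child of s), while
   their images are within 2 2^k 2^p of each other through c, contradicting
   the lower Lipschitz bound. *)

Lemma walk_cat T (adj : T -> T -> Prop) u v w a b :
  walk adj u v a -> walk adj v w b -> walk adj u w (a + b).
Proof.
elim=> [x|x y z c hxy _ IH] hvw; first by rewrite add0n.
by rewrite addSn; apply: walkS hxy (IH hvw).
Qed.

Lemma walk1 T (adj : T -> T -> Prop) x y : adj x y -> walk adj x y 1.
Proof. by move=> hxy; apply: walkS hxy (walk0 _ _). Qed.

Lemma walk_rev T (adj : T -> T -> Prop) u v a :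
  (forall x y, adj x y -> adj y x) -> walk adj u v a -> walk adj v u a.
Proof.
move=> sym; elim=> [x|x y z c hxy _ IH]; first exact: walk0.
by rewrite -addn1; apply: walk_cat IH (walk1 (sym _ _ hxy)).
Qed.

Lemma walk_isdist T (adj : T -> T -> Prop) u v a :
  walk adj u v a -> exists d, isdist adj u v d /\ d <= a.
Proof.
elim/ltn_ind: a => a IH hw.
case: (classic (exists a', a' < a /\ walk adj u v a')) => [[a' [lt_a' hw']]|no_shorter].
  by have [d [hd le_d]] := IH a' lt_a' hw'; exists d; split=> //; apply: leq_trans le_d (ltnW _).
exists a; split=> //; split=> // a' hw'; rewrite leqNgt; apply/negP => lt_a'.
by apply: no_shorter; exists a'.
Qed.

Lemma isdist1 T (adj : T -> T -> Prop) x y : adj x y -> x <> y -> isdist adj x y 1.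
Proof.
move=> hxy neq_xy; split; first exact: walk1.
by case=> // hw; inversion hw.
Qed.

Lemma Tadj_sym n u v : Tadj n u v -> Tadj n v u.
Proof. by move=> [hu [hv [b hb]]]; split=> //; split=> //; exists b; tauto. Qed.

Lemma walk_down n r x : Tvert n (x ++ r) -> walk (Tadj n) x (x ++ r) (size r).
Proof.
elim: r x => [|b r IH] x hv; first by rewrite cats0; apply: walk0.
rewrite -cat_rcons in hv *; apply: walkS (IH _ hv).
move: hv; rewrite /Tadj /Tvert size_cat size_rcons => hv.
by split; [lia | split; [lia | exists b; left]].
Qed.

Fixpoint lcp_size (x y : seq bool) : nat :=
  match x, y with
  | a :: x', b :: y' => if a == b then (lcp_size x' y').+1 else 0
  | _, _ => 0
  end.

Lemma lcp_size_le x y : lcp_size x y <= size x /\ lcp_size x y <= size y.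
Proof. by elim: x y => [|a x IH] [|b y] //=; case: eqP => // _; apply: IH. Qed.

Lemma lcp_size_refl x : lcp_size x x = size x.
Proof. by elim: x => //= a x ->; rewrite eqxx. Qed.

Lemma lcp_size_cat s u v : lcp_size (s ++ u) (s ++ v) = size s + lcp_size u v.
Proof. by elim: s => //= a s ->; rewrite eqxx. Qed.

Lemma lcp_size_rcons x b z :
  lcp_size (rcons x b) z = lcp_size x z \/ lcp_size (rcons x b) z = (lcp_size x z).+1.
Proof.
elim: x z => [|a x IH] [|c z] /=; try by left.
  by case: (b == c); [right | left].
by case: (a == c); [case: (IH z) => ->; [left | right] | left].
Qed.

(* The tree distance: up from x to the common ancestor, then down to y. *)
Definition tdist (x y : seq bool) : nat := size x + size y - 2 * lcp_size x y.

(* Each tree edge changes tdist to a fixed endpoint by at most one, hence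
   tdist is a lower bound for the length of any walk. *)
Lemma tdist_rcons x b z : tdist (rcons x b) z <= (tdist x z).+1 /\ tdist x z <= (tdist (rcons x b) z).+1.
Proof.
rewrite /tdist size_rcons.
have [le1 le2] := lcp_size_le x z; have [le1' le2'] := lcp_size_le (rcons x b) z.
by rewrite size_rcons in le1'; case: (lcp_size_rcons x b z) => eq_lcp; rewrite eq_lcp in le1' le2' *; lia.
Qed.

Lemma walk_tdist n x z d : walk (Tadj n) x z d -> tdist x z <= d.
Proof.
elim=> [y|x' y z' d' [_ [_ [b [->|->]]]] _ IH]; first by rewrite /tdist lcp_size_refl; lia.
- by have [_ h] := tdist_rcons x' b z'; lia.
- by have [h _] := tdist_rcons y b z'; lia.
Qed.

(* Descendants of two distinct grandchildren of s are far apart: their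
   common prefix is at most one letter longer than s. *)
Lemma branch_walk_lower n s (i j : bool * bool) q q' d : i != j ->
  walk (Tadj n) ((s ++ [:: i.1; i.2]) ++ q) ((s ++ [:: j.1; j.2]) ++ q') d ->
  size q + size q' + 2 <= d.
Proof.
move=> neq_ij /walk_tdist.
have : lcp_size ([:: i.1; i.2] ++ q) ([:: j.1; j.2] ++ q') <= 1.
  by move: neq_ij; case: i => [[] []]; case: j => [[] []].
rewrite /tdist -!catA lcp_size_cat; set L := lcp_size _ _.
by rewrite !size_cat /=; lia.
Qed.

Lemma first_exit (P : seq bool -> Prop) r t : P t -> ~ P (t ++ r) ->
  exists q b r', r = q ++ b :: r' /\ P (t ++ q) /\ ~ P (t ++ rcons q b).
Proof.
elim: r t => [|b r IH] t in_t out_tr; first by rewrite cats0 in out_tr.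
case: (classic (P (rcons t b))) => in_tb.
- rewrite -cat_rcons in out_tr.
  have [q [b' [r' [-> [in_q out_q]]]]] := IH _ in_tb out_tr.
  by exists (b :: q), b', r'; rewrite -!cat_rcons.
- by exists [::], b, r; rewrite cats0 /= cats1.
Qed.

Lemma Dadj_sym m u v : Dadj m u v -> Dadj m v u.
Proof. by move=> [w [hw h]]; exists w; split=> //; tauto. Qed.

Definition isEnd (v : dvtx) (w : seq (bool * bool)) : Prop := v = (ends w).1 \/ v = (ends w).2.

Lemma ends_cat x e v : isEnd v (x ++ e) -> isEnd v e \/ exists y sd, v = inr (y ++ e, sd).
Proof.
elim: x => [|[sd h] x IH] /=; first by left.
rewrite /isEnd; case: h => /= [[h|h]|[h|h]].
- by right; exists x, sd.
- exact: IH (or_intror h).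
- exact: IH (or_introl h).
- by right; exists x, sd.
Qed.

Lemma ends_inr_suffix w w0 sd : isEnd (inr (w0, sd)) w -> suffix w0 w.
Proof.
have suffix_cons (x : bool * bool) w' : suffix w' (x :: w') by apply/suffixP; exists [:: x].
elim: w => [|[s h] w IH]; first by move=> [h|h].
rewrite /isEnd; case: h => /= [[h|h]|[h|h]].
- by case: h => -> _; apply: suffix_cons.
- exact: suffix_trans (IH (or_intror h)) (suffix_cons _ _).
- exact: suffix_trans (IH (or_introl h)) (suffix_cons _ _).
- by case: h => -> _; apply: suffix_cons.
Qed.

Lemma subdiamond_boundary m e u v :
  Dadj m u v -> subdiamond m e u -> ~ subdiamond m e v -> isEnd u e.
Proof.
move=> [w [hw adj_uv]] [w' [hw' [/suffixP [x ->] hu]]] out_v.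
have u_end : isEnd u w by rewrite /isEnd; case: adj_uv => ->; tauto.
have not_below : ~~ suffix e w.
  by apply/negP => hs; apply: out_v; exists w; do 2!split=> //; case: adj_uv => ->; tauto.
case: (ends_cat hu) => // [[y [sd eq_u]]]; subst u.
move: not_below; rewrite (suffix_trans _ (ends_inr_suffix u_end)) //.
by apply/suffixP; exists y.
Qed.

Lemma subdiamond_exit m e u v d : walk (Dadj m) u v d ->
  subdiamond m e u -> ~ subdiamond m e v ->
  exists c d', isEnd c e /\ d' <= d /\ walk (Dadj m) u c d'.
Proof.
elim=> [x|x y z d' adj_xy _ IH] in_u out_v; first by [].
case: (classic (subdiamond m e y)) => in_y.
- have [c [d1 [hc [le_d1 hw]]]] := IH in_y out_v.
  by exists c, d1.+1; do 2!split=> //; apply: walkS adj_xy hw.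
- by exists x, 0; split; [apply: subdiamond_boundary adj_xy in_u in_y | split=> //; apply: walk0].
Qed.

(* The two endpoints of an edge of D_j are joined by a walk of length
   2^(m-j) in D_m, along the bottom-most path through its subdivisions. *)
Lemma ends_walk m d w : size w + d = m -> walk (Dadj m) (ends w).1 (ends w).2 (2 ^ d).
Proof.
elim: d w => [|d IH] w hw.
  by apply: walk1; exists w; split; [rewrite -hw addn0 | left; case: (ends w)].
have low := IH ((false, false) :: w); have high := IH ((false, true) :: w).
rewrite /= in low high; rewrite expnS mul2n -addnn.
by apply: walk_cat (low _) (high _); rewrite /=; lia.
Qed.

Definition Dconn m (u v : dvtx) : Prop := exists d, walk (Dadj m) u v d.

Lemma Dconn_trans m u v w : Dconn m u v -> Dconn m v w -> Dconn m u w.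
Proof. by move=> [a ha] [b hb]; exists (a + b); apply: walk_cat ha hb. Qed.

Lemma Dconn_sym m u v : Dconn m u v -> Dconn m v u.
Proof. by move=> [a ha]; exists a; apply: walk_rev ha; apply: Dadj_sym. Qed.

Lemma Dconn_ends_bottom m w : size w <= m ->
  Dconn m (ends w).1 (inl false) /\ Dconn m (ends w).2 (inl false).
Proof.
have ends_conn w' : size w' <= m -> Dconn m (ends w').1 (ends w').2.
  by move=> hw'; exists (2 ^ (m - size w')); apply: ends_walk; lia.
elim: w => [|[sd h] w IH] hw.
  by split; [exists 0; apply: walk0 | exact: Dconn_sym (ends_conn [::] hw)].
have [bot_1 bot_2] := IH (ltnW hw).
have new_bot : Dconn m (inr (w, sd)) (inl false).
  by apply: Dconn_trans bot_1; apply: Dconn_sym; exact: (ends_conn ((sd, false) :: w) hw).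
by clear hw; case: h.
Qed.

Lemma Dvert_conn m u v : Dvert m u -> Dvert m v -> Dconn m u v.
Proof.
have to_bot x : Dvert m x -> Dconn m x (inl false).
  by move=> [w [hw [->|->]]]; have := Dconn_ends_bottom (eq_leq hw); case.
by move=> /to_bot hu /to_bot hv; apply: Dconn_trans hu (Dconn_sym hv).
Qed.

Section BranchEscape.

Variables (n m k p : nat) (F : seq bool -> dvtx).
Hypothesis hF : forall u, Tvert n u -> Dvert m (F u).
Hypothesis hbil : forall u v du dv, Tvert n u -> Tvert n v ->
  isdist (Tadj n) u v du -> isdist (Dadj m) (F u) (F v) dv ->
  2 ^ p * du <= dv /\ dv <= 2 ^ k * 2 ^ p * du.
Variables (s : seq bool) (e : seq (bool * bool)).
Hypothesis hMgen : forall t, Tvert n t -> prefix s t ->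
  1 <= size t - size s <= 2 ^ k + 2 -> subdiamond m e (F t).

Definition branch (i : bool * bool) (q : seq bool) : seq bool := (s ++ [:: i.1; i.2]) ++ q.

Definition near (c : dvtx) (i : bool * bool) : Prop :=
  exists q, 2 ^ k <= size q /\ Tvert n (branch i q) /\
    exists d, d <= 2 ^ k * 2 ^ p /\ walk (Dadj m) (F (branch i q)) c d.

Lemma edge_image_walk a b : Tvert n (rcons a b) ->
  exists d, d <= 2 ^ k * 2 ^ p /\ walk (Dadj m) (F a) (F (rcons a b)) d.
Proof.
move=> vb; have va : Tvert n a by move: vb; rewrite /Tvert size_rcons; lia.
have edge1 : isdist (Tadj n) a (rcons a b) 1.
  apply: isdist1; first by do 2!split=> //; exists b; left.
  by move=> /(congr1 size); rewrite size_rcons; lia.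
have [d0 hd0] := Dvert_conn (hF va) (hF vb).
have [d [hd _]] := walk_isdist hd0.
have [_ le_d] := hbil va vb edge1 hd.
by exists d; split; [rewrite muln1 in le_d | case: hd].
Qed.

Lemma escape_near_terminal i :
  (exists x, Tvert n x /\ prefix (s ++ [:: i.1; i.2]) x /\
     size s + (2 ^ k + 3) <= size x /\ ~ subdiamond m e (F x)) ->
  exists c, isEnd c e /\ near c i.
Proof.
move=> [x [vx [/prefixP [r eq_x] [size_x out_x]]]]; subst x.
rewrite !size_cat /= in size_x.
have [top [rest [eq_r size_top]]] :
    exists top rest : seq bool, r = top ++ rest /\ size top = 2 ^ k.
  exists (take (2 ^ k) r), (drop (2 ^ k) r); rewrite cat_take_drop size_takel //.
  by change (2 ^ k <= size (T := bool) r); lia.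
subst r; rewrite catA -/(branch i top) in vx out_x.
have in_top : subdiamond m e (F (branch i top)).
  apply: hMgen.
  - by move: vx; rewrite /Tvert size_cat; lia.
  - by apply/prefixP; exists ([:: i.1; i.2] ++ top); rewrite /branch !catA.
  - by rewrite /branch !size_cat size_top /=; apply/andP; split; lia.
have [q [b [r' [eq_rest [in_a out_b]]]]] :=
  first_exit (P := fun y => subdiamond m e (F y)) in_top out_x.
have eq_a : branch i top ++ q = branch i (top ++ q) by rewrite /branch catA.
have eq_b : branch i top ++ rcons q b = rcons (branch i (top ++ q)) b.
  by rewrite -eq_a rcons_cat.
rewrite eq_a in in_a; rewrite eq_b in out_b.
have vb : Tvert n (rcons (branch i (top ++ q)) b).
  by move: vx; rewrite eq_rest -eq_b /Tvert !size_cat size_rcons /=; lia.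
have [d [le_d hw]] := edge_image_walk vb.
have [c [d' [hc [le_d' hw']]]] := subdiamond_exit hw in_a out_b.
exists c; split=> //; exists (top ++ q); split; first by rewrite size_cat size_top leq_addr.
split; first by move: vb; rewrite /Tvert size_rcons; lia.
by exists d'; split; [lia | ].
Qed.

(* Lower Lipschitz bound: two distinct branches cannot be near the same vertex. *)
Lemma near_same_vertex c i j : i != j -> near c i -> near c j -> False.
Proof.
move=> neq_ij [q [size_q [vi [d1 [le_d1 hw1]]]]] [q' [size_q' [vj [d2 [le_d2 hw2]]]]].
have [dv [hdv le_dv]] := walk_isdist (walk_cat hw1 (walk_rev (@Dadj_sym m) hw2)).
have walk_via_s : walk (Tadj n) (branch i q) (branch j q')
    (size ([:: i.1; i.2] ++ q) + size ([:: j.1; j.2] ++ q')).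
  apply: walk_cat (walk_rev (@Tadj_sym n) _) _;
    by rewrite /branch -catA; apply: walk_down; rewrite catA.
have [du [hdu _]] := walk_isdist walk_via_s.
have far := branch_walk_lower neq_ij (proj1 hdu).
have [low _] := hbil vi vj hdu hdv.
have : 2 ^ p * (2 * 2 ^ k + 2) <= 2 ^ p * du by rewrite leq_mul2l; apply/orP; right; lia.
have pos_p : 0 < 2 ^ p by rewrite expn_gt0.
move: low le_dv le_d1 le_d2 pos_p; set P := 2 ^ p; set K := 2 ^ k; nia.
Qed.

End BranchEscape.

Lemma pigeon_two T (x y a b c : T) :
  a = x \/ a = y -> b = x \/ b = y -> c = x \/ c = y -> a = b \/ a = c \/ b = c.
Proof. by move=> [->|->] [->|->] [->|->]; tauto. Qed.

Theorem lemmaL (n m k p : nat) (F : seq bool -> dvtx)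
  (hn : 0 < n) (hm : 0 < m) (hk : 0 < k)
  (hF : forall u, Tvert n u -> Dvert m (F u))
  (hbil : forall u v du dv, Tvert n u -> Tvert n v ->
     isdist (Tadj n) u v du -> isdist (Dadj m) (F u) (F v) dv ->
     2 ^ p * du <= dv /\ dv <= 2 ^ k * 2 ^ p * du)
  (s : seq bool) (hs : Tvert n s)
  (e : seq (bool * bool)) (he : size e <= m)
  (hMs : subdiamond m e (F s))
  (hMgen : forall t, Tvert n t -> prefix s t ->
     1 <= size t - size s <= 2 ^ k + 2 -> subdiamond m e (F t)) :
  forall l : seq (bool * bool), uniq l ->
    (forall i, i \in l -> exists x, Tvert n x /\ prefix (s ++ [:: i.1; i.2]) x /\
        size s + (2 ^ k + 3) <= size x /\ ~ subdiamond m e (F x)) ->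
    size l <= 2.
Proof.
move=> [|i1 [|i2 [|i3 l]]] // uniq_l escapes.
move: uniq_l; rewrite /= !inE !negb_or => /andP[/andP[n12 /andP[n13 _]] /andP[/andP[n23 _] _]].
have terminal i : i \in [:: i1, i2, i3 & l] -> exists c, isEnd c e /\ near n m k p F s c i.
  by move=> /escapes; apply: escape_near_terminal.
have [c1 [end1 near1]] := terminal i1 (mem_head _ _).
have [c2 [end2 near2]] := terminal i2 ltac:(by rewrite !inE eqxx orbT).
have [c3 [end3 near3]] := terminal i3 ltac:(by rewrite !inE eqxx !orbT).
have clash := near_same_vertex hbil.
exfalso; case: (pigeon_two end1 end2 end3) => [eq_c|[eq_c|eq_c]]; subst.
- exact: clash n12 near1 near2.
- exact: clash n13 near1 near3.
- exact: clash n23 near2 near3.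
Qed.
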